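(* Let $\mu\ge 0$ be an integer and let $\mathcal{F}$ be a $(2\mu+1)$-uniform weak $\Delta$-system. (i) If the intersection size of $\mathcal{F}$ is $\mu+1$ and $|\mathcal{F}|\ge \mu^2+\mu+3$, then $\mathcal{F}$ is a strong $\Delta$-system. (ii) If the intersection size of $\mathcal{F}$ is $\mu$ and $|\mathcal{F}|\ge(\mu+1)^2+\mu+3$, then $\mathcal{F}$ is a strong $\Delta$-system.
   Context: A family $\mathcal{F}=\{S_1,\dots,S_m\}$ of (distinct) finite sets is $h$-uniform if $|S|=h$ for every $S\in\mathcal{F}$. It is a weak $\Delta$-system if there is an integer $\lambda$ (its intersection size) with $|S_i\cap S_j|=\lambda$ for all distinct $S_i,S_j\in\mathcal{F}$. It is a strong $\Delta$-system (sunflower) if there is a set $C$ (the core) with $S_i\cap S_j=C$ for all distinct $S_i,S_j\in\mathcal{F}$. *)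

From mathcomp Require Import all_boot.
Set Implicit Arguments. Unset Strict Implicit. Unset Printing Implicit Defensive.

Definition uniform (T : finType) (h : nat) (F : {set {set T}}) : Prop :=
  forall S, S \in F -> #|S| = h.

Definition weak_delta (T : finType) (lambda : nat) (F : {set {set T}}) : Prop :=
  forall S1 S2, S1 \in F -> S2 \in F -> S1 != S2 -> #|S1 :&: S2| = lambda.

Definition strong_delta (T : finType) (F : {set {set T}}) : Prop :=
  exists C : {set T},
    forall S1 S2, S1 \in F -> S2 \in F -> S1 != S2 -> S1 :&: S2 = C.

From mathcomp Require Import all_boot zify.
Set Implicit Arguments. Unset Strict Implicit. Unset Printing Implicit Defensive.

(* Fix A in F.  The sets symdiff S A, for S <> A in F, form a 2d-uniform weak
   Delta-system with intersection size d = #|A :\: S|.  For such a system with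
   at least d^2 + d + 2 members, Cauchy-Schwarz on incidence vectors shows that
   every point lies either in at most d + 1 members or in all but at most d of
   them; double counting then shows that the points of the second kind form a
   d-set Y contained in every member.  Once Y is inside A, every S meets A in
   exactly A :\: Y, which is the core.  In case (i), if Y were not inside A, the
   petals symdiff S A :\: Y would be #|F| - 1 disjoint sets all meeting A, too
   many.  In case (ii) the derived system is one member short, so we add
   z |: A for a point z outside every member (available after embedding T
   into option T); z then keeps Y inside A. *)

Lemma leq_mul_sqr (a b : nat) : 2 * (a * b) <= a ^ 2 + b ^ 2.
Proof. by have := (nat_AGM2 a b).1; rewrite sqrnD; lia. Qed.

Section CauchySchwarz.
Variables (I : finType) (u v : I -> nat).

Lemma sum_mul_weighted_le (a b : nat) :
  2 * a * b * (\sum_i u i * v i) <= a ^ 2 * (\sum_i u i ^ 2) + b ^ 2 * \sum_i v i ^ 2.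
Proof.
rewrite !big_distrr -big_split /=; apply: leq_sum => i _.
by rewrite -!expnMn; apply: leq_trans (leq_mul_sqr (a * u i) (b * v i)); nia.
Qed.

Lemma cauchy_schwarz_nat :
  (\sum_i u i * v i) ^ 2 <= (\sum_i u i ^ 2) * \sum_i v i ^ 2.
Proof.
set P := \sum_i _; set U := \sum_i _; set V := \sum_i _.
have [V0 | V_gt0] := posnP V.
  suff -> : P = 0 by [].
  apply: big1 => i _; suff -> : v i = 0 by rewrite muln0.
  have : v i ^ 2 <= V by rewrite /V (bigD1 i) //= leq_addr.
  by rewrite V0 leqn0 expn_eq0 andbT => /eqP.
have := sum_mul_weighted_le V P; rewrite -/P -/U -/V => h.
by rewrite -(leq_pmul2l V_gt0); nia.
Qed.

End CauchySchwarz.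

Lemma cardsE_sum (T : finType) (X : {set T}) : #|X| = \sum_x (x \in X).
Proof. by rewrite -sum1_card big_mkcond; apply: eq_bigr => x _; case: (x \in X). Qed.

Lemma sum_mem_card (T : finType) (A B : {set T}) :
  \sum_(x in A) (x \in B) = #|A :&: B|.
Proof. by rewrite -big_mkcondr /= sum1dep_card; apply: eq_card => x; rewrite !inE. Qed.

Section Incidence.
Variable T : finType.
Implicit Types (A : {set T}) (P Q : {set {set T}}).

Definition degree P x := #|[set S in P | x \in S]|.

Lemma degreeE P x : degree P x = \sum_(S in P) (x \in S).
Proof.
rewrite /degree -sum1_card big_mkcond [RHS]big_mkcond /=.
by apply: eq_bigr => S _; rewrite inE; case: (S \in P).
Qed.

Lemma sum_degree A P : \sum_(x in A) degree P x = \sum_(S in P) #|A :&: S|.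
Proof.
under eq_bigr do rewrite degreeE.
by rewrite exchange_big; apply: eq_bigr => S _; rewrite sum_mem_card.
Qed.

Lemma sum_mul_incidence P Q (f g : {set T} -> {set T}) :
  \sum_y (\sum_(S in P) (y \in f S)) * (\sum_(C in Q) (y \in g C)) =
  \sum_(S in P) \sum_(C in Q) #|f S :&: g C|.
Proof.
under eq_bigr do rewrite big_distrl /=.
rewrite exchange_big; apply: eq_bigr => S _.
under eq_bigr do rewrite big_distrr /=.
rewrite exchange_big; apply: eq_bigr => C _.
rewrite cardsE_sum; apply: eq_bigr => y _.
by rewrite inE; case: (y \in f S); case: (y \in g C).
Qed.

End Incidence.

Lemma sum_diag (I : finType) (P : {set I}) (w : I -> nat) i a b :
  i \in P -> w i = a -> {in P :\ i, forall j, w j = b} ->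
  \sum_(j in P) w j = a + (#|P| - 1) * b.
Proof.
move=> iP wi offdiag; rewrite (big_setD1 i iP) wi (eq_bigr _ offdiag) sum_nat_const.
by rewrite (cardsD1 i P) iP add1n subn1.
Qed.

Lemma sum_diag_le (I : finType) (P : {set I}) (w : I -> nat) i b :
  i \in P -> {in P :\ i, forall j, w j <= b} ->
  \sum_(j in P) w j <= w i + (#|P| - 1) * b.
Proof.
move=> iP offdiag; rewrite (big_setD1 i iP) leq_add2l (cardsD1 i P) iP add1n subn1.
by rewrite -sum_nat_const; apply: leq_sum.
Qed.

Lemma sum_pairs (I : finType) (P : {set I}) (w : I -> I -> nat) a b :
  {in P, forall i, w i i = a} -> {in P &, forall i j, i != j -> w i j = b} ->
  \sum_(i in P) \sum_(j in P) w i j = #|P| * (a + (#|P| - 1) * b).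
Proof.
move=> diag offdiag; rewrite -sum_nat_const; apply: eq_bigr => i iP.
apply: sum_diag (diag i iP) _ => // j; rewrite !inE => /andP[ji jP].
by rewrite offdiag // eq_sym.
Qed.

Lemma degree_split_arith d D E : 0 < d -> d ^ 2 + d + 2 <= D + E ->
  (D * (E * d)) ^ 2 <= D * (2 * d - 1 + (D - 1) * (d - 1)) * (E * (2 * d + (E - 1) * d)) ->
  D <= d.+1 \/ E <= d.
Proof.
move=> d_gt0 large.
case: (posnP D) => [-> | D_gt0]; first by left.
case: (posnP E) => [-> | E_gt0]; first by right.
have pos : 0 < D * (E * d) by rewrite !muln_gt0 D_gt0 E_gt0.
have -> : 2 * d - 1 + (D - 1) * (d - 1) = (d - 1) * D + d by nia.
have -> : 2 * d + (E - 1) * d = d * (E + 1) by nia.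
move=> cs; have {cs} key : D * (E * d) <= ((d - 1) * D + d) * (E + 1).
  by rewrite -(leq_pmul2l pos); apply: leq_trans cs _; nia.
by case: (leqP D d.+1) => [|D_big]; [left | right; nia].
Qed.

Section HalfWeakDelta.
Variables (T : finType) (d : nat) (G : {set {set T}}).
Hypotheses (G_unif : uniform (2 * d) G) (G_weak : weak_delta d G)
  (G_large : d ^ 2 + d + 2 <= #|G|).

Local Notation N := #|G|.

Lemma half_weak_delta_gt0 : 0 < d.
Proof.
case: (posnP d) => // d0; have : G \subset [set set0].
  by apply/subsetP => S SG; rewrite inE -cards_eq0 G_unif // d0.
by move/subset_leq_card; rewrite cards1; move: G_large; rewrite d0; lia.
Qed.

Lemma sum_degree_member D : D \in G -> \sum_(x in D) degree G x = d * (N + 1).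
Proof.
move=> DG; rewrite sum_degree (sum_diag (a := 2 * d) (b := d) DG).
- nia.
- by rewrite setIid G_unif.
by move=> S; rewrite !inE => /andP[SD SG]; apply: G_weak; rewrite // eq_sym.
Qed.

Lemma degree_dichotomy x : degree G x <= d.+1 \/ N <= degree G x + d.
Proof.
have d_gt0 := half_weak_delta_gt0.
set X := [set S : {set T} | x \in S]; set H := G :&: X; set E := G :\: X.
have degH : degree G x = #|H| by rewrite /degree setIdE.
have cardHE : #|H| + #|E| = N := cardsID X G.
pose u (y : T) := \sum_(S in H) (y \in S :\ x).
pose z (y : T) := \sum_(C in E) (y \in C).
have uu : \sum_y u y ^ 2 = #|H| * (2 * d - 1 + (#|H| - 1) * (d - 1)).
  under eq_bigr do rewrite -mulnn.
  rewrite sum_mul_incidence; apply: sum_pairs => [S | S S'].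
    rewrite !inE setIid => /andP[SG xS]; have := cardsD1 x S.
    by rewrite xS G_unif //; lia.
  rewrite !inE => /andP[SG xS] /andP[S'G xS'] SS'.
  rewrite -setDIl; have := cardsD1 x (S :&: S'); rewrite !inE xS xS' G_weak //=.
  lia.
have zz : \sum_y z y ^ 2 = #|E| * (2 * d + (#|E| - 1) * d).
  under eq_bigr do rewrite -mulnn.
  rewrite sum_mul_incidence; apply: sum_pairs => [C | C C'].
    by rewrite !inE setIid => /andP[_ CG]; rewrite G_unif.
  by rewrite !inE => /andP[_ CG] /andP[_ C'G]; apply: G_weak.
have uz : \sum_y u y * z y = #|H| * (#|E| * d).
  rewrite sum_mul_incidence -sum_nat_const; apply: eq_bigr => S.
  rewrite !inE => /andP[SG xS]; rewrite -sum_nat_const; apply: eq_bigr => C.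
  rewrite !inE => /andP[xC CG]; rewrite setIDAC.
  have := cardsD1 x (S :&: C); rewrite inE (negbTE xC) andbF add0n => <-.
  by apply: G_weak => //; apply: contraNneq xC => <-.
have := cauchy_schwarz_nat u z; rewrite uu zz uz degH -cardHE.
case/(degree_split_arith d_gt0); rewrite ?cardHE //; first by left.
by right; lia.
Qed.

Definition heavy := [set x : T | N <= degree G x + d].

Lemma degree_le_card x : degree G x <= N.
Proof. by apply: subset_leq_card; apply/subsetP => S; rewrite inE => /andP[]. Qed.

Lemma sum_degree_heavy (W : {set T}) :
  W \subset heavy -> #|W| * (N - d) <= \sum_(x in W) degree G x.
Proof.
move=> /subsetP Wheavy; rewrite -sum_nat_const; apply: leq_sum => x /Wheavy.
by rewrite inE; lia.
Qed.

Lemma heavy_meet_ge D : D \in G -> d <= #|D :&: heavy|.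
Proof.
move=> DG; rewrite leqNgt; apply/negP => small.
have split_sum : \sum_(x in D :&: heavy) degree G x + \sum_(x in D :\: heavy) degree G x
    = d * (N + 1) by rewrite -big_setID sum_degree_member.
have heavy_sum : \sum_(x in D :&: heavy) degree G x <= #|D :&: heavy| * N.
  by rewrite -sum_nat_const; apply: leq_sum => x _; apply: degree_le_card.
have light_sum : \sum_(x in D :\: heavy) degree G x <= #|D :\: heavy| * d.+1.
  rewrite -sum_nat_const; apply: leq_sum => x; rewrite !inE => /andP[xl _].
  by case: (degree_dichotomy x) => // hN; rewrite hN in xl.
by have := cardsID heavy D; rewrite (G_unif DG); nia.
Qed.

Lemma heavy_meet_le D : D \in G -> #|D :&: heavy| <= d.
Proof.
move=> DG; have := sum_degree_heavy (subsetIr D heavy); set W := D :&: heavy.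
have WD : W :&: D = W by rewrite setIC setIA setIid.
have upper : \sum_(S in G) #|W :&: S| <= #|W :&: D| + (N - 1) * d.
  apply: (sum_diag_le (b := d) DG) => S; rewrite !inE => /andP[SD SG].
  by rewrite -(G_weak DG SG) 1?eq_sym // subset_leq_card // setSI // subsetIl.
rewrite WD in upper; rewrite sum_degree leqNgt => lower; apply/negP => big; nia.
Qed.

Lemma card_heavy : #|heavy| <= d.
Proof.
have := sum_degree_heavy (subxx heavy); rewrite sum_degree.
have upper : \sum_(S in G) #|heavy :&: S| <= N * d.
  by rewrite -sum_nat_const; apply: leq_sum => S SG; rewrite setIC heavy_meet_le.
rewrite leqNgt => lower; apply/negP => big; nia.
Qed.

Lemma heavy_core : #|heavy| = d /\ {in G, forall D : {set T}, heavy \subset D}.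
Proof.
have heavy_sub D : D \in G -> heavy \subset D.
  move=> DG; apply/setIidPr/eqP; rewrite eqEcard subsetIr.
  exact: leq_trans card_heavy (heavy_meet_ge DG).
split=> //; apply/eqP; rewrite eqn_leq card_heavy /=.
have [D DG] : exists D, D \in G by apply/set0Pn; rewrite -card_gt0; lia.
by move/setIidPr: (heavy_sub D DG) => {1}<-; apply: heavy_meet_ge.
Qed.

End HalfWeakDelta.

Lemma core_meet (T : finType) (d : nat) (G : {set {set T}}) (Y : {set T}) :
  weak_delta d G -> #|Y| = d -> {in G, forall D : {set T}, Y \subset D} ->
  forall D D', D \in G -> D' \in G -> D != D' -> D :&: D' = Y.
Proof.
move=> Gw cardY YG D D' DG D'G DD'; apply/esym/eqP.
by rewrite eqEcard subsetI !YG //= cardY Gw.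
Qed.

Lemma card_le_disjoint_family (I T : finType) (J : {set I}) (A : {set T})
    (f : I -> {set T}) :
  {in J, forall i, f i :&: A != set0} ->
  {in J &, forall i j, i != j -> [disjoint f i & f j]} -> #|J| <= #|A|.
Proof.
move=> meetA disj; case: (set_0Vmem A) => [A0 | [a _]].
  rewrite A0 cards0 leqn0 cards_eq0; apply/eqP/setP => i; rewrite inE.
  by apply/negP => /meetA; rewrite A0 setI0 eqxx.
pose g i := odflt a [pick x in f i :&: A].
have gP i : i \in J -> g i \in f i :&: A.
  move=> /meetA/set0Pn[x xfA]; rewrite /g; case: pickP => [y -> // | none].
  by rewrite none in xfA.
rewrite -(@card_in_imset _ _ g); last first.
  move=> i j iJ jJ gij; apply/eqP/negPn/negP => ij.
  have /setP/(_ (g i)) := disjoint_setI0 (disj i j iJ jJ ij).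
  by move: (gP i iJ) (gP j jJ); rewrite -gij !inE => /andP[-> _] /andP[-> _].
apply/subset_leq_card/subsetP => _ /imsetP[i iJ ->].
by move: (gP i iJ); rewrite inE => /andP[].
Qed.

Lemma uniform_setU1 (T : finType) k (E : {set T}) (G : {set {set T}}) :
  uniform k G -> #|E| = k -> uniform k (E |: G).
Proof. by move=> Gu cardE D; rewrite in_setU1 => /predU1P[-> | /Gu]. Qed.

Lemma weak_delta_setU1 (T : finType) l (E : {set T}) (G : {set {set T}}) :
  weak_delta l G -> {in G, forall D, #|E :&: D| = l} -> weak_delta l (E |: G).
Proof.
move=> Gw EG D D'; rewrite !in_setU1.
case/predU1P=> [-> | DG] /predU1P[-> | D'G] neq; first by rewrite eqxx in neq.
- exact: EG.
- by rewrite setIC EG.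
exact: Gw.
Qed.

Section ImageFamily.
Variables (T T' : finType) (f : T -> T').
Hypothesis f_inj : injective f.

Definition image_family (F : {set {set T}}) := [set f @: S | S : {set T} in F].

Lemma card_image_family F : #|image_family F| = #|F|.
Proof. exact/card_imset/imset_inj. Qed.

Lemma uniform_image k F : uniform k F -> uniform k (image_family F).
Proof. by move=> Fu _ /imsetP[S SF ->]; rewrite card_imset // Fu. Qed.

Lemma setI_image (S S' : {set T}) : f @: S :&: f @: S' = f @: (S :&: S').
Proof. by rewrite imsetI // => x y _ _ /f_inj. Qed.

Lemma weak_delta_image l F : weak_delta l F -> weak_delta l (image_family F).
Proof.
move=> Fw _ _ /imsetP[S SF ->] /imsetP[S' S'F ->] neq.
by rewrite setI_image card_imset // Fw //; apply: contraNneq neq => ->.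
Qed.

Lemma strong_delta_image F : strong_delta (image_family F) -> strong_delta F.
Proof.
case=> C core; exists (f @^-1: C) => S S' SF S'F neq; apply/setP => x.
rewrite -(core (f @: S) (f @: S')) ?imset_f ?(inj_eq (imset_inj f_inj)) //.
by rewrite setI_image [RHS]inE mem_imset.
Qed.

End ImageFamily.

Section SymmetricDifference.
Variable T : finType.
Implicit Types (A S : {set T}) (F : {set {set T}}).

Definition symdiff S A := (S :\: A) :|: (A :\: S).

Lemma card_symdiff S A : #|symdiff S A| + 2 * #|S :&: A| = #|S| + #|A|.
Proof.
rewrite !cardsE_sum big_distrr -!big_split; apply: eq_bigr => x _ /=; rewrite !inE.
by case: (x \in S); case: (x \in A).
Qed.

Lemma card_symdiffI S S' A :
  #|symdiff S A :&: symdiff S' A| + #|S :&: A| + #|S' :&: A| = #|S :&: S'| + #|A|.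
Proof.
rewrite !cardsE_sum -!big_split; apply: eq_bigr => x _ /=; rewrite !inE.
by case: (x \in S); case: (x \in S'); case: (x \in A).
Qed.

Lemma symdiff_inj A : injective (symdiff^~ A).
Proof.
move=> S S' /setP eqSS'; apply/setP => x; move: (eqSS' x); rewrite !inE.
by case: (x \in S); case: (x \in S'); case: (x \in A).
Qed.

Lemma setI_symdiff S A : A :&: symdiff S A = A :\: S.
Proof. by apply/setP => x; rewrite !inE; case: (x \in S); case: (x \in A). Qed.

Definition symdiff_family F A := [set symdiff S A | S in F :\ A].

Section Pivot.
Variables (F : {set {set T}}) (k l d : nat) (A : {set T}).
Hypotheses (AF : A \in F) (F_unif : uniform k F) (F_weak : weak_delta l F) (kE : k = l + d).

Lemma card_symdiff_family : #|symdiff_family F A| = #|F| - 1.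
Proof.
rewrite card_in_imset; last by move=> S S' _ _; apply: symdiff_inj.
by rewrite (cardsD1 A F) AF add1n subn1.
Qed.

Lemma symdiff_family_uniform : uniform (2 * d) (symdiff_family F A).
Proof.
move=> D /imsetP[S]; rewrite !inE => /andP[SA SF] ->.
by have := card_symdiff S A; rewrite (F_unif SF) (F_unif AF) (F_weak SF AF SA); lia.
Qed.

Lemma symdiff_family_weak : weak_delta d (symdiff_family F A).
Proof.
move=> D D' /imsetP[S]; rewrite !inE => /andP[SA SF] -> /imsetP[S']; rewrite !inE.
move=> /andP[S'A S'F] -> neq; have SS' : S != S' by apply: contraNneq neq => ->.
have := card_symdiffI S S' A.
by rewrite (F_weak SF AF SA) (F_weak S'F AF S'A) (F_weak SF S'F SS') (F_unif AF); lia.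
Qed.

Lemma card_pivot_diff S : S \in F -> S != A -> #|A :\: S| = d.
Proof.
by move=> SF SA; rewrite cardsD setIC (F_weak SF AF SA) (F_unif AF); lia.
Qed.

Lemma strong_delta_of_core (Y : {set T}) : #|Y| = d -> Y \subset A ->
  {in symdiff_family F A, forall D : {set T}, Y \subset D} -> strong_delta F.
Proof.
move=> cardY YA YG.
have coreS S : S \in F -> A :\: Y \subset S.
  move=> SF; case: (eqVneq S A) => [-> | SA]; first exact: subsetDl.
  have SAG : symdiff S A \in symdiff_family F A by apply: imset_f; rewrite !inE SA.
  have YE : Y = A :\: S.
    apply/eqP; rewrite eqEcard -setI_symdiff subsetI YA YG //=.
    by rewrite setI_symdiff card_pivot_diff // cardY.
  by rewrite YE setDDr setDv set0U subsetIr.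
exists (A :\: Y) => S S' SF S'F SS'; apply/esym/eqP.
rewrite eqEcard subsetI !coreS //= F_weak // cardsD (setIidPr YA) cardY F_unif //.
lia.
Qed.

End Pivot.
End SymmetricDifference.

Lemma weak_delta_ceil_half_strong (T : finType) (mu : nat) (F : {set {set T}}) :
  uniform (2 * mu + 1) F -> weak_delta (mu + 1) F -> mu ^ 2 + mu + 3 <= #|F| ->
  strong_delta F.
Proof.
move=> Fu Fw Flarge.
have [A AF] : exists A, A \in F by apply/set0Pn; rewrite -card_gt0; lia.
have kE : 2 * mu + 1 = mu + 1 + mu by lia.
set G := symdiff_family F A.
have Gu : uniform (2 * mu) G := symdiff_family_uniform AF Fu Fw kE.
have Gw : weak_delta mu G := symdiff_family_weak AF Fu Fw kE.
have symdiffG S : S \in F :\ A -> symdiff S A \in G by move=> SFA; apply: imset_f.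
have Glarge : mu ^ 2 + mu + 2 <= #|G| by rewrite card_symdiff_family //; lia.
have [cardY YG] := heavy_core Gu Gw Glarge; set Y := heavy mu G in cardY YG.
apply: (strong_delta_of_core AF Fu Fw kE cardY _ YG).
apply/negPn/negP => /subsetPn[y yY yA].
have YA_small : #|Y :&: A| < mu.
  have : 0 < #|Y :\: A| by apply/card_gt0P; exists y; rewrite inE yA.
  by have := cardsID A Y; lia.
have FA_small : #|F :\ A| <= #|A|.
  apply: (card_le_disjoint_family (f := fun S => symdiff S A :\: Y)) => [S | S S'].
    rewrite !inE => /andP[SA SF]; rewrite -card_gt0 setIC setIDA setI_symdiff cardsD.
    have : #|(A :\: S) :&: Y| <= #|Y :&: A|.
      by apply: subset_leq_card; rewrite setIC setIS // subsetDl.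
    by rewrite (card_pivot_diff AF Fu Fw kE SF SA); lia.
  move=> SFA S'FA SS'.
  rewrite -setI_eq0 -setDIl (core_meet Gw cardY YG) ?setDv ?symdiffG //.
  by rewrite (inj_eq (@symdiff_inj _ A)).
by move: Flarge FA_small; rewrite (cardsD1 A F) AF (Fu A AF); nia.
Qed.

Lemma weak_delta_floor_half_strong_fresh (T : finType) (mu : nat) (F : {set {set T}}) (z : T) :
  uniform (2 * mu + 1) F -> weak_delta mu F -> (mu + 1) ^ 2 + mu + 3 <= #|F| ->
  {in F, forall S : {set T}, z \notin S} -> strong_delta F.
Proof.
move=> Fu Fw Flarge zF.
have [A AF] : exists A, A \in F by apply/set0Pn; rewrite -card_gt0; lia.
have kE : 2 * mu + 1 = mu + (mu + 1) by lia.
set G := symdiff_family F A; set E := z |: A.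
have zG D : D \in G -> z \notin D.
  move=> /imsetP[S]; rewrite !inE => /andP[_ SF] ->.
  by rewrite /symdiff !inE (negbTE (zF S SF)) (negbTE (zF A AF)).
have EG : E \notin G by apply/negP => /zG; rewrite setU11.
have EGu : uniform (2 * (mu + 1)) (E |: G).
  apply: uniform_setU1 (symdiff_family_uniform AF Fu Fw kE) _.
  by rewrite cardsU1 (zF A AF) (Fu A AF); lia.
have EGw : weak_delta (mu + 1) (E |: G).
  apply: weak_delta_setU1 (symdiff_family_weak AF Fu Fw kE) _ => D DG.
  have -> : E :&: D = A :&: D.
    apply/setP => x; rewrite !inE; case: eqVneq => // ->.
    by rewrite (negbTE (zG D DG)) !andbF.
  move: DG => /imsetP[S]; rewrite !inE => /andP[SA SF] ->.
  by rewrite setI_symdiff (card_pivot_diff AF Fu Fw kE SF SA).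
have EGlarge : (mu + 1) ^ 2 + (mu + 1) + 2 <= #|E |: G|.
  by rewrite cardsU1 EG card_symdiff_family //; lia.
have [cardY YEG] := heavy_core EGu EGw EGlarge; set Y := heavy _ _ in cardY YEG.
apply: (strong_delta_of_core AF Fu Fw kE cardY) => [| D DG]; last exact/YEG/setU1r.
have [D DG] : exists D, D \in G by apply/set0Pn; rewrite -card_gt0 card_symdiff_family //; lia.
apply/subsetP => y yY; have := subsetP (YEG E (setU11 _ _)) y yY.
rewrite !inE => /predU1P[yz | //]; have := subsetP (YEG D (setU1r _ DG)) y yY.
by rewrite yz (negbTE (zG D DG)).
Qed.

Lemma weak_delta_floor_half_strong (T : finType) (mu : nat) (F : {set {set T}}) :
  uniform (2 * mu + 1) F -> weak_delta mu F -> (mu + 1) ^ 2 + mu + 3 <= #|F| ->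
  strong_delta F.
Proof.
have Some_injT : injective (@Some T) by move=> x y [].
move=> Fu Fw Flarge; apply: (strong_delta_image Some_injT).
apply: (weak_delta_floor_half_strong_fresh (mu := mu) (z := None)).
- exact: uniform_image.
- exact: weak_delta_image.
- by rewrite card_image_family.
by move=> _ /imsetP[S _ ->]; apply/imsetP => -[].
Qed.

Theorem lemma7 (T : finType) (mu : nat) (F : {set {set T}}) :
  uniform (2 * mu + 1) F ->
  (weak_delta (mu + 1) F -> mu ^ 2 + mu + 3 <= #|F| -> strong_delta F) /\
  (weak_delta mu F -> (mu + 1) ^ 2 + mu + 3 <= #|F| -> strong_delta F).
Proof.
move=> Fu; split.
  exact: weak_delta_ceil_half_strong.
exact: weak_delta_floor_half_strong.
Qed.
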